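(* Let $E$ be a nonzero real Banach space, let $\widetilde K$ be a nonempty $w(E^*,E)$-compact convex subset of $E^*$, and let $\tau_{\widetilde K}(x)=\max_{x^*\in\widetilde K}\langle x,x^*\rangle$ for $x\in E$. Then for all $(y^*,y^{**})\in E^*\times E^{**}$: $(y^*,y^{**})\in G\big((\partial\tau_{\widetilde K})^{\mathbb F}\big)$ if and only if $y^*\in\widetilde K$ and $\langle y^*,y^{**}\rangle=\sup_{x^*\in\widetilde K}\langle x^*,y^{**}\rangle$.
   Context: $E^*$, $E^{**}$ are dual and bidual with their pairings. For proper convex lsc $f$ on $E$, $x^*\in\partial f(x)$ iff $f(x)+f^*(x^* )=\langle x,x^*\rangle$ ($f^*$ the Fenchel conjugate); $\partial\tau_{\widetilde K}$ is closed, monotone and quasidense. For a multifunction $S\colon E\rightrightarrows E^*$ with nonempty graph $G(S)$: closed means $G(S)$ norm-closed; monotone means $\langle s-t,s^*-t^*\rangle\ge0$ on $G(S)$; quasidense means for every $(x,x^* )$, $\inf_{(s,s^* )\in G(S)}[\tfrac12\|s-x\|^2+\tfrac12\|s^*-x^*\|^2+\langle s-x,s^*-x^*\rangle]\le0$. Let $\varphi_S(x,x^* )=\sup_{(s,s^* )\in G(S)}[\langle s,x^*\rangle+\langle x,s^*\rangle-\langle s,s^*\rangle]$, and $\varphi_S^*$ its conjugate on $E^*\times E^{**}$ under the pairing $\langle (x,x^* ),(y^*,y^{**})\rangle=\langle x,y^*\rangle+\langle x^*,y^{**}\rangle$. For $S$ closed, monotone, quasidense, the Fitzpatrick extension $S^{\mathbb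 F}\colon E^*\rightrightarrows E^{**}$ is given by $(y^*,y^{**})\in G(S^{\mathbb F})$ iff $\varphi_S^*(y^*,y^{**})=\langle y^*,y^{**}\rangle$. *)

From HB Require Import structures.
From mathcomp Require Import all_boot all_order all_algebra.
From mathcomp Require Import all_classical all_reals all_analysis.
Set Implicit Arguments. Unset Strict Implicit. Unset Printing Implicit Defensive.
Import Order.TTheory GRing.Theory Num.Theory.
Import numFieldNormedType.Exports.
Local Open Scope classical_set_scope.
Local Open Scope ring_scope.

Record dual (R : realType) (E : normedModType R) := Dual {
  dual_fun :> E -> R;
  dual_lin : forall (a : R) (x y : E), dual_fun (a *: x + y) = a * dual_fun x + dual_fun y;
  dual_bdd : exists C : R, forall x : E, `|dual_fun x| <= C * `|x| }.

Definition dual_norm_le (R : realType) (E : normedModType R) (f : dual E) (M : R) :=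
  0 <= M /\ forall x : E, `|f x| <= M * `|x|.

Record bidual (R : realType) (E : normedModType R) := Bidual {
  bidual_fun :> dual E -> R;
  bidual_lin : forall (a : R) (f g h : dual E),
      (forall x, h x = a * f x + g x) ->
      bidual_fun h = a * bidual_fun f + bidual_fun g;
  bidual_bdd : exists C : R, forall (f : dual E) (M : R),
      dual_norm_le f M -> `|bidual_fun f| <= C * M }.

(* w(E^*,E) is the topology of pointwise convergence on E, i.e. the topology
   induced by the embedding E^* -> R^E (product topology) *)
Definition weak_star_compact (R : realType) (E : normedModType R) (K : set (dual E)) :=
  compact [set (dual_fun k : {ptws E -> R}) | k in K].

Definition dual_convex (R : realType) (E : normedModType R) (K : set (dual E)) :=
  forall (k1 k2 : dual E) (t : R), K k1 -> K k2 -> 0 <= t <= 1 ->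
    exists k, K k /\ forall x, k x = t * k1 x + (1 - t) * k2 x.

Definition support_fun (R : realType) (E : normedModType R) (K : set (dual E)) (x : E) : R :=
  sup [set k x | k in K].

Definition subdiff_graph (R : realType) (E : normedModType R) (f : E -> R)
  : set (E * dual E) :=
  [set p : E * dual E | forall y : E, f p.1 + p.2 (y - p.1) <= f y].

Definition fitzpatrick (R : realType) (E : normedModType R) (G : set (E * dual E))
  (x : E) (xs : dual E) : \bar R :=
  ereal_sup [set ((xs s.1 + s.2 x - s.2 s.1)%:E) | s in G] : \bar R.

Definition fitzpatrick_conj (R : realType) (E : normedModType R) (G : set (E * dual E))
  (ys : dual E) (yss : bidual E) : \bar R :=
  ereal_sup [set ((ys p.1 + yss p.2)%:E - fitzpatrick G p.1 p.2)%E
            | p in [set: E * dual E]].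

Definition fitz_ext_graph (R : realType) (E : normedModType R) (G : set (E * dual E))
  : set (dual E * bidual E) :=
  [set q : dual E * bidual E | fitzpatrick_conj G q.1 q.2 = (q.2 q.1)%:E].

From HB Require Import structures.
From mathcomp Require Import all_boot all_order all_algebra.
From mathcomp Require Import all_classical all_reals all_analysis.
From mathcomp Require Import lra.
Import Order.TTheory GRing.Theory Num.Theory.
Import numFieldNormedType.Exports.
Local Open Scope classical_set_scope.
Local Open Scope ring_scope.

(* Since K is weak* compact, tau_K is a finite maximum, hence sublinear, and a
   sublinear function has subdifferential { x* <= tau_K | x* s = tau_K s } at s.
   By the separation theorem, x* <= tau_K forces x* in K: otherwise a finite
   subcover of K by the weak* open sets { k | k x <> x* x } gives finitely many
   coordinates, and the nearest point of K to x* in these coordinates yields a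
   separating vector.  Hence the Fitzpatrick function is tau_K x + iota_K x*,
   its conjugate is iota_K y* + sup_K y**, and the theorem compares the latter
   with y** y*. *)

(* [compact_cover] is only stated for pointed spaces. *)
HB.instance Definition ptws_pointed (R : realType) (E : normedModType R) :=
  isPointed.Build {ptws E -> R} (fun=> 0).

Section DualLinear.
Context {R : realType} {E : normedModType R} (k : dual E).

Lemma dual0 : k 0 = 0.
Proof. by have := dual_lin k (-1) 0 0; rewrite scaler0 addr0 mulN1r addNr. Qed.

Lemma dualD x y : k (x + y) = k x + k y.
Proof. by have := dual_lin k 1 x y; rewrite scale1r mul1r. Qed.

Lemma dualZ (a : R) x : k (a *: x) = a * k x.
Proof. by have := dual_lin k a x 0; rewrite addr0 dual0 addr0. Qed.

Lemma dualN x : k (- x) = - k x.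
Proof. by rewrite -scaleN1r dualZ mulN1r. Qed.

Lemma dualB x y : k (x - y) = k x - k y.
Proof. by rewrite dualD dualN. Qed.

Lemma dual_sum (I : Type) (s : seq I) (l : I -> R) (v : I -> E) :
  k (\sum_(i <- s) l i *: v i) = \sum_(i <- s) l i * k (v i).
Proof.
elim: s => [|i s IH]; first by rewrite !big_nil dual0.
by rewrite !big_cons dual_lin IH.
Qed.

End DualLinear.

Lemma dual_inj {R : realType} {E : normedModType R} (k1 k2 : dual E) :
  k1 =1 k2 -> k1 = k2.
Proof.
case: k1 k2 => f1 l1 b1 [f2 l2 b2] /= /funext e; subst f2.
by rewrite (Prop_irrelevance l1 l2) (Prop_irrelevance b1 b2).
Qed.

Lemma continuous_ptws_sum_sqr {R : realType} {E : normedModType R}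
    (s : seq E) (c : E -> R) :
  continuous (fun g : {ptws E -> R} => \sum_(x <- s) (g x - c x) ^+ 2).
Proof.
elim: s => [|x s IH].
  rewrite (_ : (fun g => _) = cst 0); first exact: cst_continuous.
  by apply: funext => g; rewrite big_nil.
have gxc : continuous (fun g : {ptws E -> R} => g x - c x).
  move=> g; apply: continuousB; last exact: cst_continuous.
  exact: (@proj_continuous E (fun=> R) x).
rewrite (_ : (fun g => _) =
    (fun g : {ptws E -> R} => (g x - c x) * (g x - c x)) +
    (fun g : {ptws E -> R} => \sum_(y <- s) (g y - c y) ^+ 2)).
  move=> g; apply: continuousD; last exact: IH.
  exact: continuousM (gxc g) (gxc g).
by apply: funext => g; rewrite big_cons expr2.
Qed.

Lemma nearest_point_obtuse {R : realFieldType} {I : Type}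
    (s : seq I) (u l : I -> R) :
  (forall t, 0 < t <= 1 ->
     \sum_(i <- s) l i ^+ 2 <= \sum_(i <- s) (t * u i - l i) ^+ 2) ->
  \sum_(i <- s) l i * u i <= 0.
Proof.
have expand t : \sum_(i <- s) (t * u i - l i) ^+ 2 = \sum_(i <- s) l i ^+ 2
    - 2 * t * \sum_(i <- s) l i * u i + t ^+ 2 * \sum_(i <- s) u i ^+ 2.
  elim: s => [|i s IH]; first by rewrite !big_nil; lra.
  by rewrite !big_cons IH; lra.
set a := \sum_(i <- s) l i * u i; set b := \sum_(i <- s) u i ^+ 2.
move=> min_l; rewrite leNgt; apply/negP => a0.
have b0 : 0 <= b by apply: sumr_ge0 => i _; exact: sqr_ge0.
(* any t in (0, 1] with t b < 2 a violates min_l *)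
pose t := a / (a + b).
have tab : t * (a + b) = a by rewrite /t divfK // gt_eqF //; lra.
have t0 : 0 < t by rewrite divr_gt0 //; lra.
have t1 : t <= 1 by rewrite ler_pdivrMr; lra.
have := min_l t; rewrite t0 t1 expand => /(_ isT).
have tb_le_a : t * b <= a by rewrite -tab ler_wpM2l //; lra.
have : 0 < t * a by rewrite mulr_gt0.
have : t * (t * b) <= t * a by rewrite ler_wpM2l // ltW.
rewrite -/a -/b expr2 mulrA; lra.
Qed.

Lemma ereal_sup_unbounded {R : realType} (S : set (\bar R)) (a d : R) :
  0 < d -> (forall t, 0 <= t -> exists2 y, S y & ((a + t * d)%:E <= y)%E) ->
  ereal_sup S = +oo%E.
Proof.
move=> d0 HS; apply: eq_infty => r.
have [|y Sy le_y] := HS (`|r - a| / d); first by rewrite divr_ge0 // ltW.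
apply: le_ereal_sup_tmp; exists y => //; apply: le_trans le_y.
by rewrite lee_fin divfK ?gt_eqF //; have := ler_norm (r - a); lra.
Qed.

Section SupportFunction.
Context {R : realType} {E : normedModType R} {K : set (dual E)}.
Hypotheses (K0 : K !=set0) (Kc : weak_star_compact K).

Lemma weak_star_compact_argmax {g : {ptws E -> R} -> R} :
  continuous g -> exists2 k, K k & forall k', K k' -> g k' <= g k.
Proof.
move=> gc; have K'0 : [set (dual_fun k : {ptws E -> R}) | k in K] !=set0.
  by case: K0 => k Kk; exists (dual_fun k), k.
have [_ /set_mem[k Kk <-] kmax] :=
  compact_EVT_max K'0 Kc (continuous_subspaceT gc).
by exists k => // k' Kk'; apply: kmax; apply/mem_set; exists k'.
Qed.

Lemma support_fun_max x :
  exists k, [/\ K k, support_fun K x = k x & forall k', K k' -> k' x <= k x].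
Proof.
have [k Kk kmax] := weak_star_compact_argmax (@proj_continuous E (fun=> R) x).
exists k; split=> //; apply/eqP; rewrite eq_le; apply/andP; split.
  by apply: ge_sup => [|_ [k' Kk' <-]]; [exists (k x), k | exact: kmax].
apply: sup_upper_bound; last by exists k.
split; first by exists (k x), k.
by exists (k x) => _ [k' Kk' <-]; exact: kmax.
Qed.

Lemma support_fun_attained x : exists2 k, K k & support_fun K x = k x.
Proof. by have [k [Kk kx _]] := support_fun_max x; exists k. Qed.

Lemma support_fun_ub x {k : dual E} : K k -> k x <= support_fun K x.
Proof. by have [k' [_ -> k'max]] := support_fun_max x; exact: k'max. Qed.

Lemma support_fun0 : support_fun K 0 = 0.
Proof. by have [k _ ->] := support_fun_attained 0; exact: dual0. Qed.

Lemma support_fun_subadd x y :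
  support_fun K (x + y) <= support_fun K x + support_fun K y.
Proof.
have [k Kk ->] := support_fun_attained (x + y).
by rewrite dualD lerD // support_fun_ub.
Qed.

Lemma support_funZ (t : R) x :
  0 <= t -> support_fun K (t *: x) = t * support_fun K x.
Proof.
move=> t0; apply/eqP; rewrite eq_le; apply/andP; split.
  have [k Kk ->] := support_fun_attained (t *: x).
  by rewrite dualZ ler_wpM2l // support_fun_ub.
by have [k Kk ->] := support_fun_attained x; rewrite -dualZ support_fun_ub.
Qed.

End SupportFunction.

Section SublinearSubdifferential.
Context {R : realType} {E : normedModType R} {f : E -> R}.
Hypotheses (f0 : f 0 = 0) (f_subadd : forall x y, f (x + y) <= f x + f y).

Lemma subdiff_graph_sublinearP s (ss : dual E) :
  subdiff_graph f (s, ss) <-> (forall x, ss x <= f x) /\ ss s = f s.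
Proof.
split=> [Hs | [ss_le ss_s] y /=]; last first.
  by rewrite dualB ss_s; have := ss_le y; lra.
have ss_le x : ss x <= f x.
  by have := Hs (x + s); rewrite /= addrK; have := f_subadd x s; lra.
split=> //; apply/eqP; rewrite eq_le ss_le /=.
by have := Hs 0; rewrite /= f0 add0r dualN; lra.
Qed.

End SublinearSubdifferential.

Section Separation.
Context {R : realType} {E : normedModType R} {K : set (dual E)}.
Hypotheses (K0 : K !=set0) (Kc : weak_star_compact K) (Kconv : dual_convex K).

Lemma weak_star_compact_finite_witness (xs : dual E) : ~ K xs ->
  exists s : seq E, forall k, K k -> exists2 x, x \in s & k x != xs x.
Proof.
move=> nKxs.
pose V x := (fun g : {ptws E -> R} => g x) @^-1` [set r | r != xs x].
have Vop x : [set: E] x -> open (V x).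
  move=> _; apply: open_comp => [g _|]; last exact: open_neq.
  exact: (@proj_continuous E (fun=> R) x).
have cover_V :
    [set (dual_fun k : {ptws E -> R}) | k in K] `<=` \bigcup_(x in setT) V x.
  move=> _ [k Kk <-]; suff [x kx] : exists x, k x != xs x by exists x.
  apply: contrapT => /forallNP k_xs; apply: nKxs.
  suff -> : xs = k by [].
  by apply: dual_inj => x; have /negP := k_xs x; rewrite negbK => /eqP.
have Kcov : cover_compact [set (dual_fun k : {ptws E -> R}) | k in K].
  by rewrite -compact_cover; exact: Kc.
have [D _ Dcov] := Kcov _ setT V Vop cover_V.
exists (finmap.enum_fset D) => k Kk.
by have [x /= Dx Vx] := Dcov _ (ex_intro2 _ _ k Kk erefl); exists x.
Qed.

Lemma support_fun_separates (xs : dual E) :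
  ~ K xs -> exists x, support_fun K x < xs x.
Proof.
move=> /weak_star_compact_finite_witness[s witness].
pose d (g : {ptws E -> R}) := \sum_(x <- s) (g x - xs x) ^+ 2.
have Nd_cont : continuous (fun g => - d g).
  by move=> g; apply: continuousN; exact: continuous_ptws_sum_sqr.
(* k0 is the nearest point of K to xs in the coordinates s, and l = xs - k0 *)
have [k0 Kk0 k0_min] := weak_star_compact_argmax K0 Kc Nd_cont.
pose l x := xs x - k0 x.
have dk0 : d (dual_fun k0) = \sum_(x <- s) l x ^+ 2.
  by apply: eq_bigr => x _; rewrite /l -sqrrN opprB.
have dk0_gt0 : 0 < \sum_(x <- s) l x ^+ 2.
  rewrite -dk0 lt0r sumr_ge0 => [|x _]; last exact: sqr_ge0.
  rewrite psumr_eq0 => [|x _]; last exact: sqr_ge0.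
  have [x sx k0x] := witness k0 Kk0.
  by rewrite andbT; apply/allPn; exists x; rewrite // sqrf_eq0 subr_eq0.
have obtuse k : K k -> \sum_(x <- s) l x * (k x - k0 x) <= 0.
  move=> Kk; apply: nearest_point_obtuse => t /andP[t0 t1].
  have [|kt [Kkt kt_def]] := Kconv _ _ t Kk Kk0; first by rewrite ltW.
  have -> : \sum_(x <- s) (t * (k x - k0 x) - l x) ^+ 2 = d kt.
    by apply: eq_bigr => x _; rewrite kt_def /l; congr (_ ^+ 2); lra.
  by rewrite -dk0 -lerN2; exact: k0_min.
exists (\sum_(x <- s) l x *: x).
have [k1 Kk1 ->] := support_fun_attained K0 Kc (\sum_(x <- s) l x *: x).
rewrite !dual_sum -subr_gt0 -sumrB.
have -> : \sum_(x <- s) (l x * xs x - l x * k1 x) =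
    \sum_(x <- s) l x ^+ 2 - \sum_(x <- s) l x * (k1 x - k0 x).
  by rewrite -sumrB; apply: eq_bigr => x _; rewrite /l; lra.
by have := obtuse k1 Kk1; lra.
Qed.

Lemma dual_le_support_funP (xs : dual E) :
  (forall x, xs x <= support_fun K x) <-> K xs.
Proof.
split=> [xs_le | Kxs x]; last exact: support_fun_ub.
by apply: contrapT => /support_fun_separates[x]; rewrite ltNge xs_le.
Qed.

Lemma subdiff_support_funP s (ss : dual E) :
  subdiff_graph (support_fun K) (s, ss) <-> K ss /\ ss s = support_fun K s.
Proof.
rewrite subdiff_graph_sublinearP; last 2 first.
- exact: support_fun0.
- exact: support_fun_subadd.
by rewrite dual_le_support_funP.
Qed.

End Separation.

Section FitzpatrickSupportFunction.
Context {R : realType} {E : normedModType R} {K : set (dual E)}.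
Hypotheses (K0 : K !=set0) (Kc : weak_star_compact K) (Kconv : dual_convex K).
Local Notation G := (subdiff_graph (support_fun K)).

Lemma fitzpatrick_support_fun_mem x xs :
  K xs -> fitzpatrick G x xs = (support_fun K x)%:E.
Proof.
move=> Kxs; apply/eqP; rewrite eq_le; apply/andP; split.
  apply: ge_ereal_sup => _ [[s ss] + <-].
  move=> /(subdiff_support_funP K0 Kc Kconv)[Kss ss_s].
  rewrite lee_fin /= ss_s.
  have := support_fun_ub K0 Kc s Kxs; have := support_fun_ub K0 Kc x Kss; lra.
have [k Kk kx] := support_fun_attained K0 Kc x.
apply: ereal_sup_ubound; exists (0 : E, k) => /=.
  by apply/(subdiff_support_funP K0 Kc Kconv); rewrite dual0 support_fun0.
by rewrite !dual0 kx subr0 add0r.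
Qed.

Lemma fitzpatrick_support_fun_notin x xs : ~ K xs -> fitzpatrick G x xs = +oo%E.
Proof.
move=> /(support_fun_separates K0 Kc Kconv)[s0 lt_s0].
have [k Kk ks0] := support_fun_attained K0 Kc s0.
apply: (@ereal_sup_unbounded _ _ (- support_fun K (- x))
  (xs s0 - support_fun K s0)).
  by rewrite subr_gt0.
move=> t t0; exists (xs (t *: s0) + k x - k (t *: s0))%:E.
  exists (t *: s0, k) => //; apply/(subdiff_support_funP K0 Kc Kconv).
  by rewrite dualZ support_funZ // ks0.
rewrite lee_fin !dualZ -ks0; have := support_fun_ub K0 Kc (- x) Kk.
rewrite dualN; lra.
Qed.

Lemma fitzpatrick_conj_support_fun_mem ys yss :
  K ys -> fitzpatrick_conj G ys yss = ereal_sup [set (yss k)%:E | k in K].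
Proof.
move=> Kys; apply/eqP; rewrite eq_le; apply/andP; split.
  apply: ge_ereal_sup => _ [[x xs] _ <-] /=.
  have [Kxs | nKxs] := pselect (K xs); last first.
    by rewrite fitzpatrick_support_fun_notin //= addeNy leNye.
  rewrite fitzpatrick_support_fun_mem // -EFinB.
  apply: le_ereal_sup_tmp; exists (yss xs)%:E; first by exists xs.
  by rewrite lee_fin; have := support_fun_ub K0 Kc x Kys; lra.
apply: ge_ereal_sup => _ [k Kk <-]; apply: ereal_sup_ubound.
exists (0 : E, k) => //=.
by rewrite fitzpatrick_support_fun_mem // (support_fun0 K0 Kc) dual0 add0r
  -EFinB subr0.
Qed.

Lemma fitzpatrick_conj_support_fun_notin ys yss :
  ~ K ys -> fitzpatrick_conj G ys yss = +oo%E.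
Proof.
move=> /(support_fun_separates K0 Kc Kconv)[x0 lt_x0].
have [k Kk] := K0.
apply: (@ereal_sup_unbounded _ _ (yss k) (ys x0 - support_fun K x0)).
  by rewrite subr_gt0.
move=> t t0; exists ((ys (t *: x0) + yss k)%:E - fitzpatrick G (t *: x0) k)%E.
  by exists (t *: x0, k).
rewrite fitzpatrick_support_fun_mem // -EFinB lee_fin dualZ support_funZ //.
lra.
Qed.

End FitzpatrickSupportFunction.

Theorem theorem3p8 (R : realType) (E : completeNormedModType R)
  (nzE : exists x : E, x != 0)
  (K : set (dual E)) (K0 : K !=set0)
  (Kc : weak_star_compact K) (Kconv : dual_convex K) :
  forall (ys : dual E) (yss : bidual E),
    fitz_ext_graph (subdiff_graph (support_fun K)) (ys, yss) <->
    (K ys /\ (yss ys)%:E = ereal_sup [set (yss k)%:E | k in K]).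
Proof.
move=> ys yss; rewrite /fitz_ext_graph /=.
have [Kys | nKys] := pselect (K ys).
  rewrite fitzpatrick_conj_support_fun_mem //.
  by split=> [-> // | [_ ->]].
by rewrite fitzpatrick_conj_support_fun_notin //; split=> [// | []].
Qed.
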